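(* Let $A=\bigoplus_{j=1}^k M_{n_j}(\mathbb{C})$ and $B=\bigoplus_{j=1}^l M_{m_j}(\mathbb{C})$, and let $\phi:A\to B$ be an injective unital *-homomorphism. If $\phi$ is an $L_{\min}$-embedding, then $\operatorname{mult}_\phi(M_{n_j}(\mathbb{C}))=1$ for each $j=1,\dots,k$.
   Context: For a unital C*-algebra $D$, $\rho_{\min}^D(x)=\inf\{\|x-p\|: p\in D \text{ a minimal projection}\}$, where a minimal projection is a nonzero $p=p^2=p^*$ such that any projection $q$ with $qp=q$ satisfies $q=0$ or $q=p$. $L_{\min}$ is the language of unital C*-algebras with an extra unary predicate $P_{\min}$ interpreted in each algebra $D$ as $\rho_{\min}^D$; an $L_{\min}$-embedding is an injective unital *-homomorphism $\phi$ with $\rho_{\min}^B(\phi(a))=\rho_{\min}^A(a)$ for all $a\in A$. For an embedding $\phi:A\to B$, $E_\phi(n_i,m_j)$ denotes the multiplicity with which $\phi$ embeds the summand $M_{n_i}(\mathbb{C})$ of $A$ into the summand $M_{m_j}(\mathbb{C})$ of $B$ (i.e. the partial map $M_{n_i}(\mathbb{C})\to M_{m_j}(\mathbb{C})$ obtained by restricting and projecting is unitarily conjugate to $x\mapsto x\otimes 1_{E_\phi(n_i,m_j)}$ plus zero), and $\operatorname{mult}_\phi(M_{n_i}(\mathbb{C}))=\sum_{j=1}^l E_\phi(n_i,m_j)$. *)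

From HB Require Import structures.
From mathcomp Require Import all_boot all_order all_algebra.
From mathcomp Require Import boolp classical_sets reals.
From mathcomp Require Import complex.
Set Implicit Arguments. Unset Strict Implicit. Unset Printing Implicit Defensive.
Import Order.TTheory GRing.Theory Num.Theory.
Local Open Scope ring_scope.

Section FDCstar.
Variable R : realType.
Local Notation C := (complex R).

Definition cabs2 (z : C) : R := (complex.Re z) ^+ 2 + (complex.Im z) ^+ 2.

Definition vnorm (n : nat) (v : 'cV[C]_n) : R := Num.sqrt (\sum_(i < n) cabs2 (v i 0)).

Definition opnorm (n : nat) (M : 'M[C]_n) : R :=
  sup [set x : R | exists v : 'cV[C]_n, vnorm v <= 1 /\ x = vnorm (M *m v)].

Definition adjmx (p q : nat) (M : 'M[C]_(p, q)) : 'M[C]_(q, p) :=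
  \matrix_(i, j) conjc (M j i).

Definition FDA (k : nat) (n : 'I_k -> nat) : Type := forall j : 'I_k, 'M[C]_(n j).

Section Ops.
Variables (k : nat) (n : 'I_k -> nat).
Definition fda_zero : FDA n := fun j => 0.
Definition fda_one : FDA n := fun j => 1%:M.
Definition fda_add (a b : FDA n) : FDA n := fun j => a j + b j.
Definition fda_opp (a : FDA n) : FDA n := fun j => - a j.
Definition fda_sub (a b : FDA n) : FDA n := fun j => a j - b j.
Definition fda_scale (c : C) (a : FDA n) : FDA n := fun j => c *: a j.
Definition fda_mul (a b : FDA n) : FDA n := fun j => a j *m b j.
Definition fda_star (a : FDA n) : FDA n := fun j => adjmx (a j).

Definition fda_norm (a : FDA n) : R := \big[Num.max/0]_(j < k) opnorm (a j).

Definition fda_projection (p : FDA n) : Prop :=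
  fda_mul p p = p /\ fda_star p = p.

Definition fda_minproj (p : FDA n) : Prop :=
  fda_projection p /\ p <> fda_zero /\
  forall q : FDA n, fda_projection q -> fda_mul q p = q -> q = fda_zero \/ q = p.

Definition rho_min (x : FDA n) : R :=
  inf [set d : R | exists p : FDA n, fda_minproj p /\ d = fda_norm (fda_sub x p)].

Definition fda_incl (i : 'I_k) (x : 'M[C]_(n i)) : FDA n :=
  fun j => match eqVneq i j with
           | EqNotNeq e => eq_rect i (fun t => 'M[C]_(n t)) x j e
           | NeqNotEq _ => 0
           end.
End Ops.

Section Maps.
Variables (k l : nat) (n : 'I_k -> nat) (m : 'I_l -> nat).

Definition star_hom (phi : FDA n -> FDA m) : Prop :=
  [/\ forall a b, phi (fda_add a b) = fda_add (phi a) (phi b),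
      forall c a, phi (fda_scale c a) = fda_scale c (phi a),
      forall a b, phi (fda_mul a b) = fda_mul (phi a) (phi b),
      forall a, phi (fda_star a) = fda_star (phi a)
    & phi (fda_one n) = fda_one m].

Definition Lmin_embedding (phi : FDA n -> FDA m) : Prop :=
  [/\ star_hom phi, injective phi & forall a, rho_min (phi a) = rho_min a].

(** entry of a matrix at natural-number indices (0 outside the range) *)
Definition mxget (p : nat) (x : 'M[C]_p) (a b : nat) : C :=
  match insub a, insub b with
  | Some a', Some b' => x a' b'
  | _, _ => 0
  end.

(** the m x m matrix  (x (x) 1_e) (+) 0, with e*p <= m; index (a,s) of
    x (x) 1_e is encoded as a*e + s *)
Definition tens_id_pad (p mm e : nat) (x : 'M[C]_p) : 'M[C]_mm :=
  \matrix_(r < mm, c < mm) (if [&& (r < p * e)%N, (c < p * e)%N & (r %% e == c %% e)%N]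
                  then mxget x (r %/ e) (c %/ e) else 0).

Definition unitary (p : nat) (U : 'M[C]_p) : Prop :=
  U *m adjmx U = 1%:M /\ adjmx U *m U = 1%:M.

(** E_phi(n_i, m_j) = e : the partial map M_{n_i} -> M_{m_j},
    x |-> (phi (incl_i x))_j, is unitarily conjugate to x |-> x (x) 1_e (+) 0 *)
Definition multiplicity (phi : FDA n -> FDA m) (i : 'I_k) (j : 'I_l) (e : nat) : Prop :=
  (n i * e <= m j)%N /\
  exists U : 'M[C]_(m j), unitary U /\
    forall x : 'M[C]_(n i),
      U *m phi (fda_incl x) j *m adjmx U = tens_id_pad (m j) e x.
End Maps.
End FDCstar.

From HB Require Import structures.
From mathcomp Require Import all_boot all_order all_algebra.
From mathcomp Require Import boolp classical_sets reals.
From mathcomp Require Import complex.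
From mathcomp Require Import ring.
Import Order.TTheory GRing.Theory Num.Theory.
Set Implicit Arguments. Unset Strict Implicit. Unset Printing Implicit Defensive.
Local Open Scope ring_scope.

(* Let p be the matrix unit e_11 of the i-th summand of A, a minimal projection,
   so that rho_min (phi p) = rho_min p = 0, and let E_j be the multiplicities.
   If all E_j vanish then phi p = 0, contradicting injectivity.  If they sum to
   at least 2, then every minimal projection q of B is a rank-one projection
   supported in a single summand j0, and phi p - q fixes a nonzero vector:
   either E_j0 >= 2 and the (at least two-dimensional) fixed space of
   (phi p)_j0 meets the kernel of q_j0, or some other summand j has E_j >= 1
   while q_j = 0.  Hence ||phi p - q|| >= 1 for every minimal q, that is
   rho_min (phi p) >= 1. *)

Section ComplexVectors.
Variable R : realType.
Local Notation C := (complex R).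

Lemma cabs2_ge0 (z : C) : 0 <= cabs2 z.
Proof. by rewrite /cabs2 addr_ge0 // sqr_ge0. Qed.

Lemma cabs2_eq0 (z : C) : (cabs2 z == 0) = (z == 0).
Proof.
by case: z => a b; rewrite /cabs2 paddr_eq0 ?sqr_ge0 // !sqrf_eq0 eq_complex.
Qed.

Lemma cabs2M (z w : C) : cabs2 (z * w) = cabs2 z * cabs2 w.
Proof. by case: z w => a b [c d]; rewrite /cabs2 /=; ring. Qed.

Lemma cabs2R (c : R) : cabs2 c%:C%C = c ^+ 2.
Proof. by rewrite /cabs2 /= expr0n addr0. Qed.

Lemma mulcJ (z : C) : z * conjc z = (cabs2 z)%:C%C.
Proof.
case: z => a b; apply/eqP; rewrite eq_complex /cabs2 /=.
by apply/andP; split; apply/eqP; ring.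
Qed.

Lemma normcE (z : C) : Normc.normc z = Num.sqrt (cabs2 z).
Proof. by case: z. Qed.

Lemma normc_sum I (r : seq I) (F : I -> C) :
  Normc.normc (\sum_(j <- r) F j) <= \sum_(j <- r) Normc.normc (F j).
Proof. exact: (@ler_norm_sum _ (Rcomplex R)). Qed.

Lemma sqr_vnorm p (v : 'cV[C]_p) : vnorm v ^+ 2 = \sum_i cabs2 (v i 0).
Proof. by rewrite sqr_sqrtr // sumr_ge0 // => i _; apply: cabs2_ge0. Qed.

Lemma vnorm0 p : vnorm (0 : 'cV[C]_p) = 0.
Proof. by rewrite /vnorm big1 ?sqrtr0 // => i _; rewrite mxE cabs2R expr0n. Qed.

Lemma vnorm_gt0 p (v : 'cV[C]_p) : v != 0 -> 0 < vnorm v.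
Proof.
apply: contraR; rewrite /vnorm sqrtr_gt0 -leNgt => sum_le0; apply/eqP/matrixP => i j.
rewrite (ord1 j) mxE; apply/eqP; rewrite -cabs2_eq0 eq_le cabs2_ge0 andbT.
apply: le_trans sum_le0; rewrite (bigD1 i) //= lerDl.
by apply: sumr_ge0 => t _; apply: cabs2_ge0.
Qed.

Lemma vnormZ p (c : R) (v : 'cV[C]_p) : 0 <= c -> vnorm (c%:C%C *: v) = c * vnorm v.
Proof.
move=> c_ge0; rewrite /vnorm (eq_bigr (fun i => c ^+ 2 * cabs2 (v i 0))); last first.
  by move=> i _; rewrite mxE cabs2M cabs2R.
by rewrite -mulr_sumr sqrtrM ?sqr_ge0 // sqrtr_sqr ger0_norm.
Qed.

Lemma normc_le_vnorm p (v : 'cV[C]_p) i : Normc.normc (v i 0) <= vnorm v.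
Proof.
rewrite normcE ler_sqrt; last by apply: sumr_ge0 => t _; apply: cabs2_ge0.
by rewrite (bigD1 i) //= lerDl; apply: sumr_ge0 => t _; apply: cabs2_ge0.
Qed.

Lemma adjmx_mul p q r (A : 'M[C]_(p, q)) (B : 'M[C]_(q, r)) :
  adjmx (A *m B) = adjmx B *m adjmx A.
Proof.
apply/matrixP => i j; rewrite !mxE rmorph_sum; apply: eq_bigr => t _.
by rewrite !mxE rmorphM mulrC.
Qed.

Lemma adjmxK p q (A : 'M[C]_(p, q)) : adjmx (adjmx A) = A.
Proof. by apply/matrixP => i j; rewrite !mxE conjcK. Qed.

Lemma adjmxZ p q c (A : 'M[C]_(p, q)) : adjmx (c *: A) = conjc c *: adjmx A.
Proof. by apply/matrixP => i j; rewrite !mxE rmorphM. Qed.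

Lemma adjmx0 p q : adjmx (0 : 'M[C]_(p, q)) = 0.
Proof. by apply/matrixP => i j; rewrite !mxE conjc0. Qed.

Lemma adjmx_delta p (a b : 'I_p) : adjmx (delta_mx a b : 'M[C]_p) = delta_mx b a.
Proof. by apply/matrixP => i j; rewrite !mxE conjc_nat andbC. Qed.

Lemma adjmx_mul_self p (y : 'cV[C]_p) : adjmx y *m y = (vnorm y ^+ 2)%:C%C%:M.
Proof.
rewrite [LHS]mx11_scalar sqr_vnorm; congr (_%:M); rewrite mxE rmorph_sum.
by apply: eq_bigr => i _; rewrite mxE mulrC mulcJ.
Qed.

Lemma unitary_adjmxK p (U : 'M[C]_p) (w : 'cV[C]_p) : unitary U -> U *m (adjmx U *m w) = w.
Proof. by move=> [UU _]; rewrite mulmxA UU mul1mx. Qed.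

End ComplexVectors.

Section OperatorNorm.
Variables (R : realType) (p : nat).
Local Notation C := (complex R).
Implicit Types (M : 'M[C]_p) (v : 'cV[C]_p).

Lemma opnorm_bounded M :
  has_ubound [set x : R | exists v, vnorm v <= 1 /\ x = vnorm (M *m v)]%classic.
Proof.
have normc_ge0 (z : C) : 0 <= Normc.normc z by rewrite normcE sqrtr_ge0.
pose a i := \sum_j Normc.normc (M i j).
exists (Num.sqrt (\sum_i a i ^+ 2)) => _ [v [v_le1 ->]].
rewrite ler_sqrt; last by apply: sumr_ge0 => i _; apply: sqr_ge0.
apply: ler_sum => i _.
have entry_le : Normc.normc ((M *m v) i 0) <= a i.
  rewrite mxE; apply: le_trans (normc_sum _ _) _; apply: ler_sum => j _.
  rewrite Normc.normcM -[leRHS]mulr1 ler_wpM2l //.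
  exact: le_trans (normc_le_vnorm v j) v_le1.
rewrite -[cabs2 _]sqr_sqrtr ?cabs2_ge0 // -normcE !expr2.
by apply: ler_pM.
Qed.

Lemma opnorm_ge M v : vnorm v <= 1 -> vnorm (M *m v) <= opnorm M.
Proof. by move=> v_le1; apply: (ub_le_sup (opnorm_bounded M)); exists v. Qed.

Lemma opnorm_ge1_fixed M v : v != 0 -> M *m v = v -> 1 <= opnorm M.
Proof.
move=> v_neq0 Mv; have v_gt0 := vnorm_gt0 v_neq0.
set w := (vnorm v)^-1%:C%C *: v.
have w_unit : vnorm w = 1 by rewrite vnormZ ?invr_ge0 ?ltW // mulVf // gt_eqF.
have w_le1 : vnorm w <= 1 by rewrite w_unit.
by have := opnorm_ge M w_le1; rewrite -scalemxAr Mv -/w w_unit.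
Qed.

Lemma opnorm0 : opnorm (0 : 'M[C]_p) = 0.
Proof.
have vnorm00 : vnorm ((0 : 'M[C]_p) *m (0 : 'cV[C]_p)) = 0 by rewrite mul0mx vnorm0.
apply/eqP; rewrite eq_le; apply/andP; split.
  apply: ge_sup => [|_ [v [_ ->]]]; last by rewrite mul0mx vnorm0.
  by exists 0, 0; rewrite vnorm00 vnorm0 ler01.
by rewrite -[X in X <= _]vnorm00 opnorm_ge // vnorm0 ler01.
Qed.

End OperatorNorm.

Section LineProjection.
Variables (R : realType) (p : nat).
Local Notation C := (complex R).
Variable y : 'cV[C]_p.

Definition line_proj : 'M[C]_p := ((vnorm y ^+ 2)%:C%C)^-1 *: (y *m adjmx y).

Lemma line_proj_adj : adjmx line_proj = line_proj.
Proof. by rewrite /line_proj adjmxZ adjmx_mul adjmxK conjc_inv conjc_real. Qed.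

Lemma line_proj_orth (v : 'cV[C]_p) : adjmx y *m v = 0 -> line_proj *m v = 0.
Proof. by move=> yv; rewrite /line_proj -scalemxAl -mulmxA yv mulmx0 scaler0. Qed.

Lemma line_proj_sub (Q : 'M[C]_p) :
  adjmx Q = Q -> Q *m y = y -> line_proj *m Q = line_proj.
Proof. by move=> Q_adj Qy; rewrite /line_proj -scalemxAl -mulmxA -Q_adj -adjmx_mul Qy. Qed.

Hypothesis y_neq0 : y != 0.

Lemma line_proj_fixed : line_proj *m y = y.
Proof.
have s_neq0 : (vnorm y ^+ 2)%:C%C != 0 :> C.
  by rewrite fmorph_eq0 sqrf_eq0 gt_eqF // vnorm_gt0.
by rewrite /line_proj -scalemxAl -mulmxA adjmx_mul_self mul_mx_scalar scalerA mulVf ?scale1r.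
Qed.

Lemma line_proj_idem : line_proj *m line_proj = line_proj.
Proof.
have yL : adjmx y *m line_proj = adjmx y.
  by rewrite -[line_proj]line_proj_adj -adjmx_mul line_proj_fixed.
by rewrite {1}/line_proj -scalemxAl -mulmxA yL.
Qed.

End LineProjection.

Lemma mulmx_delta_entry (R : pzSemiRingType) p q r (A : 'M[R]_(p, q))
    (u : 'I_q) (v : 'I_r) a b :
  (A *m delta_mx u v) a b = A a u * (b == v)%:R.
Proof.
rewrite mxE (bigD1 u) //= big1 ?addr0; first by rewrite mxE eqxx.
by move=> c /negbTE cu; rewrite mxE cu mulr0.
Qed.

Lemma corner_delta (R : realType) p (o : 'I_p) (Q : 'M[complex R]_p) :
  Q *m delta_mx o o = Q -> adjmx Q = Q -> Q = Q o o *: delta_mx o o.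
Proof.
move=> Qo Q_adj; have Q_entry a b : Q a b = Q a o * (b == o)%:R.
  by rewrite -[in LHS]Qo mulmx_delta_entry.
have Q_col a : Q a o = Q o o * (a == o)%:R.
  by rewrite -[in LHS]Q_adj mxE Q_entry rmorphM rmorph_nat -[in RHS]Q_adj mxE.
by apply/matrixP => a b; rewrite Q_entry Q_col !mxE -mulrA -natrM mulnb.
Qed.

Section Blocks.
Variables (R : realType) (k : nat) (n : 'I_k -> nat).
Local Notation C := (complex R).
Local Notation A := (FDA R n).
Implicit Types (a q x : A) (i j : 'I_k).

Lemma fda_ext a b : (forall j, a j = b j) -> a = b.
Proof. exact: functional_extensionality_dep. Qed.

Lemma fda_incl_id i (x : 'M[C]_(n i)) : fda_incl x i = x.
Proof.
rewrite /fda_incl; case: eqVneq => [e|]; last by rewrite eqxx.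
by rewrite (eq_irrelevance e erefl).
Qed.

Lemma fda_incl_neq i j (x : 'M[C]_(n i)) : i != j -> fda_incl x j = 0.
Proof. by rewrite /fda_incl; case: eqVneq. Qed.

Lemma fda_incl_block a i : (forall j, i != j -> a j = 0) -> a = fda_incl (a i).
Proof.
move=> a_off; apply: fda_ext => j; case: (eqVneq i j) => [<-|ij].
  by rewrite fda_incl_id.
by rewrite a_off // fda_incl_neq.
Qed.

Lemma fda_incl0 i : fda_incl (0 : 'M[C]_(n i)) = fda_zero R n.
Proof.
apply: fda_ext => j; case: (eqVneq i j) => [<-|ij]; first by rewrite fda_incl_id.
by rewrite fda_incl_neq.
Qed.

Lemma fda_mul_incl i (x : 'M[C]_(n i)) a : fda_mul (fda_incl x) a = fda_incl (x *m a i).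
Proof.
apply: fda_ext => j; rewrite /fda_mul; case: (eqVneq i j) => [<-|ij].
  by rewrite !fda_incl_id.
by rewrite !fda_incl_neq // mul0mx.
Qed.

Lemma fda_projection_incl i (x : 'M[C]_(n i)) :
  x *m x = x -> adjmx x = x -> fda_projection (fda_incl x).
Proof.
move=> xx x_adj; split; first by rewrite fda_mul_incl fda_incl_id xx.
apply: fda_ext => j; rewrite /fda_star; case: (eqVneq i j) => [<-|ij].
  by rewrite fda_incl_id.
by rewrite fda_incl_neq // adjmx0.
Qed.

Lemma fda_norm_ge0 a : 0 <= fda_norm a.
Proof. exact: bigmax_ge_id. Qed.

Lemma opnorm_le_fda_norm a j : opnorm (a j) <= fda_norm a.
Proof. exact: (le_bigmax _ (fun j => opnorm (a j))). Qed.

Lemma fda_norm0 : fda_norm (fda_zero R n) = 0.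
Proof.
apply/eqP; rewrite eq_le fda_norm_ge0 andbT.
by apply: bigmax_le => // j _; rewrite /fda_zero opnorm0.
Qed.

Lemma fda_norm_sub_ge1 x q j (v : 'cV[C]_(n j)) :
  v != 0 -> x j *m v = v -> q j *m v = 0 -> 1 <= fda_norm (fda_sub x q).
Proof.
move=> v_neq0 xv qv; apply: le_trans (opnorm_le_fda_norm _ j).
by apply: (opnorm_ge1_fixed v_neq0); rewrite /fda_sub mulmxBl xv qv subr0.
Qed.

End Blocks.

Section MinimalProjections.
Variables (R : realType) (k : nat) (n : 'I_k -> nat).
Local Notation C := (complex R).
Local Notation A := (FDA R n).

Lemma minproj_incl_delta i (o : 'I_(n i)) :
  fda_minproj (fda_incl (delta_mx o o : 'M[C]_(n i))).
Proof.
split; [|split].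
- by apply: fda_projection_incl; rewrite ?mul_delta_mx ?adjmx_delta.
- move=> /(congr1 (fun a : A => a i o o)).
  by rewrite fda_incl_id /fda_zero !mxE !eqxx => /eqP; rewrite oner_eq0.
move=> q [qq qs] qp.
have q_off j : i != j -> q j = 0.
  by move=> ij; rewrite -qp /fda_mul fda_incl_neq // mulmx0.
have q_corner : q i = q i o o *: delta_mx o o.
  apply: corner_delta; last by have := congr1 (fun a : A => a i) qs.
  by have := congr1 (fun a : A => a i) qp; rewrite /fda_mul fda_incl_id.
have c_idem : q i o o * q i o o = q i o o.
  have := congr1 (fun a : A => a i o o) qq; rewrite /fda_mul /= {1 2}q_corner.
  by rewrite -scalemxAl -scalemxAr mul_delta_mx scalerA !mxE !eqxx !mulr1.
rewrite (fda_incl_block q_off) q_corner.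
have : q i o o * (q i o o - 1) == 0 by rewrite mulrBr mulr1 c_idem subrr.
rewrite mulf_eq0 subr_eq0 => /orP[/eqP->|/eqP->].
  by left; rewrite scale0r fda_incl0.
by right; rewrite scale1r.
Qed.

Lemma minproj_rank1 (q : A) : fda_minproj q ->
  exists j0 (y : 'cV[C]_(n j0)),
    (forall j, j0 != j -> q j = 0) /\
    (forall v : 'cV[C]_(n j0), adjmx y *m v = 0 -> q j0 *m v = 0).
Proof.
move=> [[qq qs] [q_neq0 q_min]].
have [j0 Q_neq0] : exists j0, q j0 != 0.
  apply: contrapT => /forallNP q0; apply: q_neq0; apply: fda_ext => j.
  by apply/eqP/negPn/negP; apply: q0.
have [b y_neq0] : exists b, col b (q j0) != 0.
  apply: contrapT => /forallNP Q0; move/eqP: Q_neq0; apply; apply/matrixP => a b.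
  by have /negP/negPn/eqP/matrixP/(_ a 0) := Q0 b; rewrite !mxE.
set y := col b (q j0) in y_neq0.
(* The projection onto the line of y lies below q, so by minimality it is q. *)
have Q_adj : adjmx (q j0) = q j0 by have := congr1 (fun a : A => a j0) qs.
have Qy : q j0 *m y = y.
  by rewrite /y !colE mulmxA; have := congr1 (fun a : A => a j0) qq; rewrite /fda_mul => ->.
pose q' := fda_incl (line_proj y).
have q'_proj : fda_projection q'.
  by apply: fda_projection_incl; rewrite ?line_proj_idem ?line_proj_adj.
have q'_sub : fda_mul q' q = q' by rewrite fda_mul_incl line_proj_sub.
exists j0, y; have [q'0|<-] := q_min q' q'_proj q'_sub.
  have := line_proj_fixed y_neq0; rewrite -(fda_incl_id (line_proj y)) -/q' q'0.
  by rewrite mul0mx => y0; rewrite -y0 eqxx in y_neq0.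
split=> [j j0j|v yv]; first by rewrite /q' fda_incl_neq.
by rewrite /q' fda_incl_id line_proj_orth.
Qed.

Lemma rho_min_minproj (p : A) : fda_minproj p -> rho_min p = 0.
Proof.
move=> p_min.
have dist_ge0 :
    lbound [set d | exists q, fda_minproj q /\ d = fda_norm (fda_sub p q)]%classic 0.
  by move=> _ [q [_ ->]]; apply: fda_norm_ge0.
have pp : fda_sub p p = fda_zero R n by apply: fda_ext => j; rewrite /fda_sub subrr.
apply/eqP; rewrite eq_le; apply/andP; split.
  by apply: ge_inf; [exists 0 | exists p; rewrite pp fda_norm0].
by apply: lb_le_inf => //; exists 0, p; rewrite pp fda_norm0.
Qed.

Lemma le_rho_min (b : R) (x : A) : (exists q : A, fda_minproj q) ->
  (forall q : A, fda_minproj q -> b <= fda_norm (fda_sub x q)) -> b <= rho_min x.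
Proof.
move=> [q q_min] b_le; apply: lb_le_inf => [|_ [q' [q'_min ->]]]; last exact: b_le.
by exists (fda_norm (fda_sub x q)), q.
Qed.

End MinimalProjections.

Section TensorIdentity.
Variables (R : realType) (p mm : nat).
Local Notation C := (complex R).

Lemma mxget_delta (a b : 'I_p) s t :
  mxget (delta_mx a b : 'M[C]_p) s t = ((s == a) && (t == b))%:R.
Proof.
rewrite /mxget; case: insubP => [s' _ <-|s_out]; last first.
  by rewrite (_ : s == a = false) //; apply: contraNF s_out => /eqP->.
case: insubP => [t' _ <-|t_out]; first by rewrite mxE.
by rewrite (_ : t == b = false) ?andbF //; apply: contraNF t_out => /eqP->.
Qed.

Lemma tens_id_pad0 (x : 'M[C]_p) : tens_id_pad mm 0 x = 0.
Proof. by apply/matrixP => r c; rewrite !mxE muln0. Qed.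

(* In the encoding (a, s) |-> a * e + s of tens_id_pad, the indices below e are
   the (0, s), so e_00 (x) 1_e fixes their basis vectors. *)
Lemma tens_id_pad_delta0_fixed e (o : 'I_p) (a : 'I_mm) :
  val o = 0%N -> (a < e)%N ->
  tens_id_pad mm e (delta_mx o o : 'M[C]_p) *m delta_mx a 0 = delta_mx a (0 : 'I_1).
Proof.
move=> o0 a_lt; have a_lt_pe : (a < p * e)%N.
  by apply: leq_trans a_lt (leq_pmull _ _); rewrite -o0 (leq_ltn_trans _ (ltn_ord o)).
apply/matrixP => r z; rewrite (ord1 z) -colE !mxE mxget_delta o0 eqxx andbT.
rewrite (modn_small a_lt) (divn_small a_lt) a_lt_pe /=.
case: (ltnP r e) => [r_lt|r_ge].
  rewrite (modn_small r_lt) (divn_small r_lt) eqxx andbT.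
  case: (eqVneq r a) => [->|ra]; first by rewrite a_lt_pe eqxx.
  by rewrite (negbTE (ra : val r != val a)) andbF.
have e_gt0 : (0 < e)%N by apply: leq_ltn_trans a_lt.
rewrite (_ : (r %/ e == 0)%N = false); last by rewrite eqn0Ngt divn_gt0 // r_ge.
rewrite (_ : r == a = false); first by case: ifP.
by apply: contraTF r_ge => /eqP->; rewrite -ltnNge.
Qed.

End TensorIdentity.

Section Unitary.
Variables (R : realType) (p : nat).
Local Notation C := (complex R).

Lemma unitary_conj_inv (U X D : 'M[C]_p) :
  unitary U -> U *m X *m adjmx U = D -> X = adjmx U *m D *m U.
Proof. by move=> [_ UU] <-; rewrite !mulmxA UU mul1mx -mulmxA UU mulmx1. Qed.

Lemma unitary_adj_delta_neq0 (U : 'M[C]_p) (a : 'I_p) :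
  unitary U -> adjmx U *m delta_mx a 0 != 0 :> 'cV_p.
Proof.
move=> U_unit; apply/eqP => /(congr1 (mulmx U)).
rewrite unitary_adjmxK // mulmx0 => /matrixP/(_ a 0).
by rewrite !mxE !eqxx => /eqP; rewrite oner_eq0.
Qed.

Lemma unitary_adj_delta_free (U : 'M[C]_p) (a b : 'I_p) : unitary U -> a != b ->
  forall c d : C,
    c *: (adjmx U *m delta_mx a 0) + d *: (adjmx U *m delta_mx b 0) = 0 :> 'cV_p ->
    c = 0 /\ d = 0.
Proof.
move=> U_unit ab c d /(congr1 (mulmx U)).
rewrite mulmxDr -!scalemxAr !unitary_adjmxK // mulmx0 => /matrixP cd.
have := cd a 0; have := cd b 0; rewrite !mxE !eqxx eq_sym (negbTE ab) /=.
by rewrite !mulr1 !mulr0 add0r addr0.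
Qed.

Lemma orthogonal_in_span2 (y u1 u2 : 'cV[C]_p) :
  (forall c d : C, c *: u1 + d *: u2 = 0 -> c = 0 /\ d = 0) ->
  exists c d : C, c *: u1 + d *: u2 != 0 /\ adjmx y *m (c *: u1 + d *: u2) = 0.
Proof.
move=> free; set al := (adjmx y *m u1) 0 0; set be := (adjmx y *m u2) 0 0.
have [al0|al_neq0] := eqVneq al 0.
  exists 1, 0; rewrite scale1r scale0r addr0; split.
    apply/eqP => u0; have [|/eqP] := free 1 0; first by rewrite scale1r scale0r addr0.
    by rewrite oner_eq0.
  by rewrite [LHS]mx11_scalar -/al al0 raddf0.
exists be, (- al); split.
  by apply/eqP => /free [_ /eqP]; rewrite oppr_eq0 (negbTE al_neq0).
rewrite mulmxDr -!scalemxAr [adjmx y *m u1]mx11_scalar [adjmx y *m u2]mx11_scalar.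
rewrite -/al -/be.
by rewrite !scale_scalar_mx mulNr mulrC -raddfD /= subrr raddf0.
Qed.

End Unitary.

Lemma star_hom0 (R : realType) k l (n : 'I_k -> nat) (m : 'I_l -> nat)
    (phi : FDA R n -> FDA R m) :
  star_hom phi -> phi (fda_zero R n) = fda_zero R m.
Proof.
move=> [_ phiZ _ _ _].
have scale0 k' (n' : 'I_k' -> nat) (a : FDA R n') : fda_scale 0 a = fda_zero R n'.
  by apply: fda_ext => j; rewrite /fda_scale scale0r.
by rewrite -(scale0 _ _ (fda_zero R n)) phiZ scale0.
Qed.

Lemma sumn_gt1_other (I : finType) (E : I -> nat) j0 :
  (1 < \sum_j E j)%N -> (E j0 <= 1)%N -> exists2 j, j0 != j & (0 < E j)%N.
Proof.
rewrite (bigD1 j0) //= => sum_gt1 Ej0_le1.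
have : (\sum_(j | j != j0) E j != 0)%N.
  by apply: contraTneq sum_gt1 => ->; rewrite addn0 -leqNgt.
rewrite sum_nat_eq0 => /forallPn [j]; rewrite negb_imply -lt0n => /andP[jj0 Ej].
by exists j; rewrite // eq_sym.
Qed.

Section Multiplicity.
Variables (R : realType) (k l : nat) (n : 'I_k -> nat) (m : 'I_l -> nat).
Variables (phi : FDA R n -> FDA R m) (i : 'I_k) (j : 'I_l) (e : nat).
Local Notation C := (complex R).
Hypothesis mult_e : multiplicity phi i j e.

Lemma multiplicity_le : (0 < n i)%N -> (e <= m j)%N.
Proof. by case: mult_e => le_m _ n_gt0; apply: leq_trans le_m; rewrite leq_pmull. Qed.

Lemma multiplicity0_vanish (x : 'M[C]_(n i)) : e = 0%N -> phi (fda_incl x) j = 0.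
Proof.
move=> e0; have [_ [U [U_unit conj]]] := mult_e.
by rewrite (unitary_conj_inv U_unit (conj x)) e0 tens_id_pad0 mulmx0 mul0mx.
Qed.

Lemma multiplicity_fixed (o : 'I_(n i)) : val o = 0%N ->
  exists U : 'M[C]_(m j), unitary U /\
    forall a : 'I_(m j), (a < e)%N ->
      phi (fda_incl (delta_mx o o)) j *m (adjmx U *m delta_mx a 0) =
      adjmx U *m delta_mx a (0 : 'I_1).
Proof.
move=> o0; have [_ [U [U_unit conj]]] := mult_e; exists U; split=> // a a_lt.
rewrite (unitary_conj_inv U_unit (conj _)) -!mulmxA unitary_adjmxK //.
by rewrite tens_id_pad_delta0_fixed.
Qed.

End Multiplicity.

Section MinEmbedding.
Variables (R : realType) (k l : nat) (n : 'I_k -> nat) (m : 'I_l -> nat).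
Variables (phi : FDA R n -> FDA R m) (i : 'I_k) (E : 'I_l -> nat).
Local Notation C := (complex R).
Hypothesis n_gt0 : (0 < n i)%N.
Hypothesis mult_E : forall j, multiplicity phi i j (E j).

Let o := Ordinal n_gt0.
Let P := phi (fda_incl (delta_mx o o : 'M[C]_(n i))).

Lemma image_fixed_vector j :
  (0 < E j)%N -> exists2 v : 'cV[C]_(m j), v != 0 & P j *m v = v.
Proof.
move=> Ej; have m_gt0 := leq_trans Ej (multiplicity_le (mult_E j) n_gt0).
have [U [U_unit U_fix]] := multiplicity_fixed (mult_E j) (o := o) erefl.
exists (adjmx U *m delta_mx (Ordinal m_gt0) 0); first exact: unitary_adj_delta_neq0.
exact: U_fix.
Qed.

Lemma image_fixed_orthogonal j (y : 'cV[C]_(m j)) : (1 < E j)%N ->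
  exists2 v : 'cV[C]_(m j), v != 0 & P j *m v = v /\ adjmx y *m v = 0.
Proof.
move=> Ej; have m_gt1 := leq_trans Ej (multiplicity_le (mult_E j) n_gt0).
pose a0 := Ordinal (ltnW m_gt1); pose a1 := Ordinal m_gt1.
have [U [U_unit U_fix]] := multiplicity_fixed (mult_E j) (o := o) erefl.
have u_free := @unitary_adj_delta_free _ _ U a0 a1 U_unit isT.
have [c [d [v_neq0 yv]]] := orthogonal_in_span2 y u_free.
exists (c *: (adjmx U *m delta_mx a0 0) + d *: (adjmx U *m delta_mx a1 0)) => //.
by rewrite mulmxDr -!scalemxAr !U_fix // ltnW.
Qed.

Lemma image_far_from_minproj : (1 < \sum_j E j)%N ->
  forall q, fda_minproj q -> 1 <= fda_norm (fda_sub P q).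
Proof.
move=> sum_gt1 q /minproj_rank1 [j0 [y [q_off q_ker]]].
case: (ltnP 1 (E j0)) => [Ej0_gt1|Ej0_le1].
  have [v v_neq0 [Pv yv]] := image_fixed_orthogonal y Ej0_gt1.
  exact: fda_norm_sub_ge1 v_neq0 Pv (q_ker v yv).
have [j j0j Ej] := sumn_gt1_other sum_gt1 Ej0_le1.
have [v v_neq0 Pv] := image_fixed_vector Ej.
by apply: fda_norm_sub_ge1 v_neq0 Pv _; rewrite q_off // mul0mx.
Qed.

Lemma rho_min_image_ge1 : (1 < \sum_j E j)%N -> 1 <= rho_min P.
Proof.
move=> sum_gt1; apply: le_rho_min; last exact: image_far_from_minproj.
have : (\sum_j E j != 0)%N by rewrite -lt0n ltnW.
rewrite sum_nat_eq0 => /forallPn [j] /=; rewrite -lt0n => Ej.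
have m_gt0 := leq_trans Ej (multiplicity_le (mult_E j) n_gt0).
pose b := Ordinal m_gt0.
by exists (fda_incl (delta_mx b b)); apply: minproj_incl_delta.
Qed.

Lemma image_vanish : (\sum_j E j = 0)%N -> P = fda_zero R m.
Proof.
move/eqP; rewrite sum_nat_eq0 => /forallP E0; apply: fda_ext => j.
exact: multiplicity0_vanish (mult_E j) _ (eqP (E0 j)).
Qed.

End MinEmbedding.

Unset Implicit Arguments.

Theorem lemma2p5 (R : realType) (k l : nat) (n : 'I_k -> nat) (m : 'I_l -> nat)
  (hn : forall j, (0 < n j)%N) (phi : FDA R n -> FDA R m) :
  Lmin_embedding phi ->
  forall (i : 'I_k) (E : 'I_l -> nat),
    (forall j, multiplicity phi i j (E j)) ->
    (\sum_(j < l) E j)%N = 1%N.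
Proof.
move=> [phi_hom phi_inj phi_rho] i E mult_E.
pose o := Ordinal (hn i).
have p_min := minproj_incl_delta R o.
have rho_image : rho_min (phi (fda_incl (delta_mx o o))) = 0.
  by rewrite phi_rho rho_min_minproj.
apply/eqP; rewrite eqn_leq leqNgt lt0n; apply/andP; split.
  by apply/negP => /(rho_min_image_ge1 (hn i) mult_E); rewrite rho_image ler10.
apply/eqP => /(image_vanish (hn i) mult_E) image0.
case: p_min => _ [+ _]; apply; apply: phi_inj.
by rewrite image0 (star_hom0 phi_hom).
Qed.
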